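(* Let $(g,f)$ be a Riordan matrix with $f(t)=\sum_{j\ge1}f_jt^j$, let $Z(t)=\sum_{j\ge0}z_jt^j$ be the generating function of its $Z$-sequence, and let $\bar f(t)=\sum_{j\ge1}\bar f_jt^j$ be the compositional inverse of $f$ (with $\bar f_0=0$). Then a sequence $(\hat b_j)_{j\ge0}$ is a type-II $B$-sequence of $(g,f)$ if and only if $\hat b_0=z_0$, $z_1=0$, for every $\ell\ge1$ $$\hat b_\ell=f_1^{\ell}\Big(z_{2\ell}-\sum_{\mathbf i=(i_1,\dots,i_k)\in\mathcal D_{2\ell,\ell-1}}\hat b_k\,\bar f_{i_1-1}\bar f_{i_2-1}\cdots\bar f_{i_k-1}\Big),$$ and for every $\ell\ge1$ $$z_{2\ell+1}=\sum_{\mathbf i=(i_1,\dots,i_k)\in\mathcal D_{2\ell+1,\ell}}\hat b_k\,\bar f_{i_1-1}\bar f_{i_2-1}\cdots\bar f_{i_k-1}.$$ (Thus $\hat b_1=f_1z_2$, $z_3=\hat b_1\bar f_2$, $\hat b_2=f_1^2(z_4-\hat b_1\bar f_3)$, $z_5=\hat b_1\bar f_4+2\hat b_2\bar f_1\bar f_2$, etc., with $z_{2\ell}$ arbitrary.)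
   Context: Let $K$ be $\mathbb{R}$ or $\mathbb{C}$. A (proper) Riordan matrix is a pair $(g,f)$ of formal power series in $K[[t]]$ with $g(0)=1$, $f(0)=0$, $f'(0)\neq 0$, identified with the infinite lower triangular matrix $(d_{n,k})_{n,k\ge0}$, $d_{n,k}=[t^n]g(t)f(t)^k$; we set $d_{n,k}=0$ if $n<0$, $k<0$ or $k>n$. The $Z$-sequence of $(g,f)$ is the unique sequence whose generating function $Z(t)$ satisfies $g(t)=1/(1-tZ(f(t)))$. A type-II $B$-sequence is a sequence $(\hat b_j)_{j\ge0}$ such that $d_{n+1,0}=\sum_{j\ge0}\hat b_j d_{n-j,j}$ for all $n\ge0$. For positive integers $n,m$, $\mathcal D_{n,m}$ is the set of compositions of $n$ into at most $m$ parts, i.e. tuples $(i_1,\dots,i_k)$ of positive integers with $1\le k\le m$ and $i_1+\cdots+i_k=n$; $k$ is the length. By convention $\mathcal D_{2,0}=\emptyset$ (empty sums are $0$). *)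

From HB Require Import structures.
From mathcomp Require Import all_boot all_order all_algebra.
Set Implicit Arguments. Unset Strict Implicit. Unset Printing Implicit Defensive.
Import Order.TTheory GRing.Theory Num.Theory.
Local Open Scope ring_scope.

Definition fps (K : Type) := nat -> K.

Section FPS.
Variable K : numFieldType.

Definition fps1 : fps K := fun n => (n == 0)%:R.
Definition fpsX : fps K := fun n => (n == 1)%:R.

Definition fps_mul (a b : fps K) : fps K :=
  fun n => \sum_(i < n.+1) a i * b (n - i)%N.

Definition fps_sub (a b : fps K) : fps K := fun n => a n - b n.

Definition fps_pow (a : fps K) (k : nat) : fps K := iter k (fps_mul a) fps1.

(* composition a(b(t)), meaningful when b(0) = 0 *)
Definition fps_comp (a b : fps K) : fps K :=
  fun n => \sum_(k < n.+1) a k * fps_pow b k n.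

Definition proper_riordan (g f : fps K) : Prop :=
  g 0%N = 1 /\ f 0%N = 0 /\ f 1%N != 0.

Definition riordan_entry (g f : fps K) (n k : nat) : K :=
  fps_mul g (fps_pow f k) n.

(* z is the Z-sequence: g = 1/(1 - t Z(f(t))), i.e. g * (1 - t Z(f)) = 1 *)
Definition is_Zsequence (g f z : fps K) : Prop :=
  forall n, fps_mul g (fps_sub fps1 (fps_mul fpsX (fps_comp z f))) n = fps1 n.

Definition is_comp_inverse (f fbar : fps K) : Prop :=
  fbar 0%N = 0 /\ (forall n, fps_comp f fbar n = fpsX n)
               /\ (forall n, fps_comp fbar f n = fpsX n).

(* type-II B-sequence: d_{n+1,0} = sum_{j>=0} bhat_j d_{n-j,j}
   (terms with j > n vanish by the convention d_{n,k} = 0 for n < 0) *)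
Definition is_typeII_Bseq (g f bhat : fps K) : Prop :=
  forall n : nat, riordan_entry g f n.+1 0 =
    \sum_(j < n.+1) bhat j * riordan_entry g f (n - j)%N j.

(* sum over compositions (i_1,..,i_k) of n into at most m parts of
   bhat_k * fbar_{i_1 - 1} ... fbar_{i_k - 1} *)
Definition comp_sum (bhat fbar : fps K) (n m : nat) : K :=
  \sum_(k < m.+1 | (0 < k)%N)
    \sum_(i : {ffun 'I_k -> 'I_n.+1}
            | [forall j, (0 < i j)%N] && ((\sum_(j < k) (i j : nat))%N == n))
      bhat k * \prod_(j < k) fbar (i j).-1.

End FPS.

From HB Require Import structures.
From mathcomp Require Import all_boot all_order all_algebra.
From mathcomp Require Import zify.
From Stdlib Require Import FunctionalExtensionality.
Set Implicit Arguments. Unset Strict Implicit. Unset Printing Implicit Defensive.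
Import Order.TTheory GRing.Theory Num.Theory.
Local Open Scope ring_scope.

(* Pairing the defining identity of a type-II B-sequence with the powers of t
   shows that it says g(t) B(t f(t)) = g(t) Z(f(t)), i.e. Z(f(t)) = B(t f(t))
   since g(0) = 1; composing with fbar, this is Z(t) = B(h(t)) for
   h(t) = t fbar(t) = fbar_1 t^2 + ...  The sum over compositions in the
   statement is the expansion of sum_k bhat_k [t^n] h^k, and [t^n] h^k vanishes
   for n < 2k and equals fbar_1^k = f_1^-k for n = 2k.  Comparing coefficients
   of t^(2l) and t^(2l+1) in Z = B(h) therefore gives exactly the two
   recursions.  Identities between power series are proved coefficientwise on
   polynomial truncations, where composition is polynomial composition. *)

Lemma eq_big_ord_vanish (R : nmodType) (F : nat -> R) a b :
  (forall i, (a <= i)%N -> F i = 0) -> (forall i, (b <= i)%N -> F i = 0) ->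
  \sum_(i < a) F i = \sum_(i < b) F i.
Proof.
wlog ab : a b / (a <= b)%N => [hwlog Fa Fb|Fa _].
  by case: (leqP a b) => [|/ltnW] ab; [|symmetry]; exact: hwlog.
rewrite (big_ord_widen _ _ ab) big_mkcond /=; apply: eq_bigr => i _.
by case: ifP => // /negbT; rewrite -leqNgt => /Fa.
Qed.

Section PolyUpTo.
Variable R : comNzSemiRingType.
Implicit Types p q : {poly R}.

Definition eq_upto N p q := forall n, (n <= N)%N -> p`_n = q`_n.

Lemma eq_upto_refl N p : eq_upto N p p. Proof. by []. Qed.

Lemma eq_upto_sym N p q : eq_upto N p q -> eq_upto N q p.
Proof. by move=> epq n hn; rewrite epq. Qed.

Lemma eq_upto_trans N p q r : eq_upto N p q -> eq_upto N q r -> eq_upto N p r.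
Proof. by move=> epq eqr n hn; rewrite epq ?eqr. Qed.

Lemma eq_upto_mul N p p' q q' :
  eq_upto N p p' -> eq_upto N q q' -> eq_upto N (p * q) (p' * q').
Proof.
move=> epp eqq n hn; rewrite !coefM; apply: eq_bigr => i _.
by rewrite epp ?eqq //; have := ltn_ord i; lia.
Qed.

Lemma eq_upto_exp N p q k : eq_upto N p q -> eq_upto N (p ^+ k) (q ^+ k).
Proof.
move=> epq; elim: k => [|k IHk]; first exact: eq_upto_refl.
by rewrite !exprS; apply: eq_upto_mul.
Qed.

Lemma exp_drop_poly p m k : (forall i, (i < m)%N -> p`_i = 0) ->
  p ^+ k = drop_poly m p ^+ k * 'X^(m * k).
Proof.
move=> p_small; have take0 : take_poly m p = 0.
  by apply/polyP => i; rewrite coef_take_poly coef0; case: ltnP => // /p_small.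
by rewrite -{1}(poly_take_drop m p) take0 add0r exprMn -exprM.
Qed.

Lemma coef_mul_exp_lt p q k n : q`_0 = 0 -> (n < k)%N -> (p * q ^+ k)`_n = 0.
Proof.
move=> q0 lt_nk; rewrite (@exp_drop_poly q 1) => [|i]; last by case: i.
by rewrite mul1n mulrA coefMXn lt_nk.
Qed.

Lemma coef_mul_comp p r q n N : q`_0 = 0 -> (n <= N)%N ->
  (p * (r \Po q))`_n = \sum_(i < N.+1) r`_i * (p * q ^+ i)`_n.
Proof.
move=> q0 le_nN; rewrite comp_polyE mulr_sumr coef_sum.
under eq_bigr do rewrite -scalerAr coefZ.
apply: (@eq_big_ord_vanish _ (fun i => r`_i * (p * q ^+ i)`_n)) => i hi.
  by rewrite nth_default ?mul0r.
by rewrite coef_mul_exp_lt ?mulr0 //; lia.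
Qed.

Lemma coef_comp_le r q n N : q`_0 = 0 -> (n <= N)%N ->
  (r \Po q)`_n = \sum_(i < N.+1) r`_i * (q ^+ i)`_n.
Proof.
by move=> q0 le_nN; rewrite -[r \Po q]mul1r (coef_mul_comp _ _ q0 le_nN);
  under eq_bigr do rewrite mul1r.
Qed.

Lemma eq_upto_comp N p p' q q' : q`_0 = 0 ->
  eq_upto N p p' -> eq_upto N q q' -> eq_upto N (p \Po q) (p' \Po q').
Proof.
move=> q0 epp eqq n hn; have q'0 : q'`_0 = 0 by rewrite -eqq.
rewrite (coef_comp_le _ q0 hn) (coef_comp_le _ q'0 hn).
apply: eq_bigr => i _; rewrite epp; last by have := ltn_ord i.
by rewrite (eq_upto_exp i eqq).
Qed.

End PolyUpTo.

Section TruncatedSeries.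
Variable K : numFieldType.
Implicit Types a b c u v : fps K.

Definition trunc N a : {poly K} := \poly_(i < N.+1) a i.

Lemma coef_trunc N a n : (n <= N)%N -> (trunc N a)`_n = a n.
Proof. by move=> hn; rewrite coef_poly ltnS hn. Qed.

Lemma fps_eq_trunc a b : (forall N, eq_upto N (trunc N a) (trunc N b)) -> a = b.
Proof.
move=> eab; apply: functional_extensionality => n.
by rewrite -(coef_trunc a (leqnn n)) eab // coef_trunc.
Qed.

Lemma trunc_fps1 N : trunc N (fps1 K) = 1.
Proof. by apply/polyP => i; rewrite coef1 coef_poly; case: ifP => //; case: i. Qed.

Lemma trunc_fpsX N : eq_upto N (trunc N (fpsX K)) 'X.
Proof. by move=> n hn; rewrite coef_trunc // coefX. Qed.

Lemma trunc_mul N a b : eq_upto N (trunc N (fps_mul a b)) (trunc N a * trunc N b).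
Proof.
move=> n hn; rewrite coef_trunc // coefM; apply: eq_bigr => i _.
by rewrite !coef_trunc //; have := ltn_ord i; lia.
Qed.

Lemma trunc_pow N a k : eq_upto N (trunc N (fps_pow a k)) (trunc N a ^+ k).
Proof.
elim: k => [|k IHk] n hn; first by rewrite coef_trunc // expr0 coef1.
rewrite (trunc_mul _ _ hn) exprS.
exact: eq_upto_mul (eq_upto_refl _) IHk _ hn.
Qed.

Lemma coef_fps_mul N a b n : (n <= N)%N -> fps_mul a b n = (trunc N a * trunc N b)`_n.
Proof. by move=> hn; rewrite -trunc_mul // coef_trunc. Qed.

Lemma coef_fps_pow N a k n : (n <= N)%N -> fps_pow a k n = (trunc N a ^+ k)`_n.
Proof. by move=> hn; rewrite -trunc_pow // coef_trunc. Qed.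

Lemma trunc_comp N a b : b 0%N = 0 ->
  eq_upto N (trunc N (fps_comp a b)) (trunc N a \Po trunc N b).
Proof.
move=> b0 n hn; rewrite coef_trunc // (@coef_comp_le _ _ _ n n) ?coef_trunc //.
apply: eq_bigr => k _; have := ltn_ord k => hk.
by rewrite coef_trunc ?(coef_fps_pow _ _ hn) //; lia.
Qed.

Lemma trunc_mulXl N a : eq_upto N (trunc N (fps_mul (fpsX K) a)) ('X * trunc N a).
Proof.
exact: eq_upto_trans (trunc_mul _ _) (eq_upto_mul (@trunc_fpsX N) (eq_upto_refl _)).
Qed.

Lemma fps_mulC a b : fps_mul a b = fps_mul b a.
Proof.
apply: fps_eq_trunc => N; apply: eq_upto_trans (@trunc_mul N a b) _.
by rewrite mulrC; apply: eq_upto_sym; apply: trunc_mul.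
Qed.

Lemma fps_mul1r a : fps_mul a (fps1 K) = a.
Proof.
apply: fps_eq_trunc => N; apply: eq_upto_trans (@trunc_mul N a _) _.
by rewrite trunc_fps1 mulr1.
Qed.

Lemma fps_mulXl a n :
  fps_mul (fpsX K) a n = if n is m.+1 then a m else 0.
Proof.
rewrite -(coef_trunc _ (leqnn n)) trunc_mulXl // coefXM.
by case: n => //= n; rewrite coef_trunc.
Qed.

Lemma fps_mulXr a n :
  fps_mul a (fpsX K) n = if n is m.+1 then a m else 0.
Proof. by rewrite fps_mulC fps_mulXl. Qed.

Lemma fps_mul_coef0 a b : fps_mul a b 0%N = a 0%N * b 0%N.
Proof. by rewrite /fps_mul big_ord1. Qed.

Lemma fps_comp_coef0 a b : fps_comp a b 0%N = a 0%N.
Proof. by rewrite /fps_comp big_ord1 /= mulr1. Qed.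

Lemma fps_comp_coef1 a b : fps_comp a b 1%N = a 1%N * b 1%N.
Proof.
rewrite /fps_comp big_ord_recl big_ord1 /= mulr0 add0r.
by rewrite /fps_pow /= fps_mul1r.
Qed.

Lemma fps_mulI a : a 0%N != 0 -> injective (fps_mul a).
Proof.
move=> a0 b c ebc; apply: functional_extensionality; elim/ltn_ind => n IHn.
have := congr1 (fun d => d n) ebc; rewrite /fps_mul !big_ord_recl !subn0 /=.
rewrite (eq_bigr (fun i : 'I_n => a (bump 0 i) * c (n - bump 0 i)%N)).
  by move/addIr/(mulfI a0).
by move=> i _; rewrite IHn // /bump /=; have := ltn_ord i; lia.
Qed.

Lemma fps_comp_assoc a u v : u 0%N = 0 -> v 0%N = 0 ->
  fps_comp (fps_comp a u) v = fps_comp a (fps_comp u v).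
Proof.
move=> u0 v0; apply: fps_eq_trunc => N.
have u0' : (trunc N u)`_0 = 0 by rewrite coef_trunc.
have v0' : (trunc N v)`_0 = 0 by rewrite coef_trunc.
have uv0 : fps_comp u v 0%N = 0 by rewrite fps_comp_coef0.
apply: eq_upto_trans (trunc_comp _ v0) _.
apply: eq_upto_trans (eq_upto_comp v0' (trunc_comp _ u0) (eq_upto_refl _)) _.
rewrite -comp_polyA; apply: eq_upto_sym.
apply: eq_upto_trans (trunc_comp _ uv0) _.
by apply: eq_upto_comp (eq_upto_refl _) (trunc_comp _ v0); rewrite coef_trunc.
Qed.

Lemma fps_compX a : fps_comp a (fpsX K) = a.
Proof.
apply: fps_eq_trunc => N; have X0 : fpsX K 0%N = 0 by [].
apply: eq_upto_trans (trunc_comp _ X0) _; rewrite -[X in eq_upto _ _ X]comp_polyXr.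
by apply: eq_upto_comp (eq_upto_refl _) (@trunc_fpsX N); rewrite coef_trunc.
Qed.

Lemma fps_comp_mulXl u v : v 0%N = 0 ->
  fps_comp (fps_mul (fpsX K) u) v = fps_mul v (fps_comp u v).
Proof.
move=> v0; apply: fps_eq_trunc => N.
have v0' : (trunc N v)`_0 = 0 by rewrite coef_trunc.
apply: eq_upto_trans (trunc_comp _ v0) _.
apply: eq_upto_trans (eq_upto_comp v0' (trunc_mulXl u) (eq_upto_refl _)) _.
rewrite comp_polyM comp_polyX; apply: eq_upto_sym.
apply: eq_upto_trans (trunc_mul _ _) _.
exact: eq_upto_mul (eq_upto_refl _) (trunc_comp _ v0).
Qed.

Lemma fps_comp_inverseP a c u v : u 0%N = 0 -> v 0%N = 0 ->
  fps_comp u v = fpsX K -> fps_comp v u = fpsX K ->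
  fps_comp a u = c <-> a = fps_comp c v.
Proof.
move=> u0 v0 uv vu; split=> [<-|->].
  by rewrite fps_comp_assoc // uv fps_compX.
by rewrite fps_comp_assoc // vu fps_compX.
Qed.

End TruncatedSeries.

Section RiordanArray.
Variable K : numFieldType.
Implicit Types g f z b : fps K.

Lemma riordan_entry_Zseq g f z n : is_Zsequence g f z ->
  riordan_entry g f n.+1 0 = fps_mul g (fps_comp z f) n.
Proof.
move=> HZ; have := HZ n.+1; rewrite /riordan_entry /fps_pow /= fps_mul1r.
rewrite {1}/fps_mul big_ord_recr /= subnn /fps_sub fps_mulXl.
have low_terms (i : 'I_n.+1) :
    g i * (fps1 K (n.+1 - i)%N - fps_mul (fpsX K) (fps_comp z f) (n.+1 - i)%N) =
    - (g i * fps_comp z f (n - i)%N).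
  by rewrite subSn ?leq_ord // fps_mulXl sub0r mulrN.
rewrite (eq_bigr _ (fun i _ => low_terms i)) sumrN subr0 mulr1 addrC.
by move/eqP; rewrite subr_eq add0r => /eqP.
Qed.

Lemma sum_riordan_entry g f b n :
  \sum_(j < n.+1) b j * riordan_entry g f (n - j) j =
  fps_mul g (fps_comp b (fps_mul (fpsX K) f)) n.
Proof.
have Xf0 : fps_mul (fpsX K) f 0%N = 0 by rewrite fps_mul_coef0 mul0r.
have XF0 : ('X * trunc n f)`_0 = 0 by rewrite coefXM.
have trunc_bXf : eq_upto n (trunc n (fps_comp b (fps_mul (fpsX K) f)))
                          (trunc n b \Po ('X * trunc n f)).
  apply: eq_upto_trans (trunc_comp b Xf0) (eq_upto_comp _ (eq_upto_refl _) (trunc_mulXl f)).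
  by rewrite coef_trunc.
rewrite (coef_fps_mul g _ (leqnn n)) (eq_upto_mul (eq_upto_refl _) trunc_bXf) //.
rewrite (coef_mul_comp _ _ XF0 (leqnn n)); apply: eq_bigr => j _.
have le_jn : (j <= n)%N by rewrite -ltnS.
rewrite coef_trunc // exprMn mulrCA coefXnM ltnNge le_jn /=.
rewrite /riordan_entry (coef_fps_mul g _ (leq_subr j n)).
by rewrite (eq_upto_mul (eq_upto_refl _) (trunc_pow _ _)) // leq_subr.
Qed.

Lemma typeII_BseqP g f z fbar b : g 0%N != 0 -> f 0%N = 0 ->
  is_Zsequence g f z -> is_comp_inverse f fbar ->
  is_typeII_Bseq g f b <-> z = fps_comp b (fps_mul fbar (fpsX K)).
Proof.
move=> g0 f0 HZ [fb0 [/functional_extensionality f_fb /functional_extensionality fb_f]].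
have Bseq_comp : is_typeII_Bseq g f b <-> fps_comp z f = fps_comp b (fps_mul (fpsX K) f).
  split=> [Bseq | zf n]; last by rewrite (riordan_entry_Zseq _ HZ) zf sum_riordan_entry.
  apply: (fps_mulI g0); apply: functional_extensionality => n.
  by rewrite -(riordan_entry_Zseq _ HZ) Bseq sum_riordan_entry.
have Xf0 : fps_mul (fpsX K) f 0%N = 0 by rewrite fps_mul_coef0 mul0r.
apply: iff_trans Bseq_comp (iff_trans (fps_comp_inverseP _ _ f0 fb0 f_fb fb_f) _).
by rewrite fps_comp_assoc // fps_comp_mulXl // f_fb.
Qed.

End RiordanArray.

Section CompositionSums.
Variable K : numFieldType.
Implicit Types a b h fbar : fps K.

Definition comp_sum_pow b h n m : K :=
  \sum_(k < m.+1 | (0 < k)%N) b k * fps_pow h k n.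

Lemma comp_sum_powS b h n m :
  comp_sum_pow b h n m.+1 = comp_sum_pow b h n m + b m.+1 * fps_pow h m.+1 n.
Proof. by rewrite /comp_sum_pow big_mkcond big_ord_recr /= -big_mkcond. Qed.

Lemma fps_pow_ffun a k n M : (n <= M)%N ->
  fps_pow a k n = \sum_(i : {ffun 'I_k -> 'I_M.+1} | (\sum_(j < k) (i j : nat))%N == n)
                    \prod_(j < k) a (i j).
Proof.
move=> le_nM; rewrite (coef_fps_pow _ _ le_nM) /trunc poly_def.
rewrite -[k in _ ^+ k]card_ord -prodr_const bigA_distr_bigA coef_sum [RHS]big_mkcond /=.
apply: eq_bigr => i _.
under eq_bigr do rewrite -mul_polyC.
rewrite big_split /= -rmorph_prod prodrXr mul_polyC coefZ coefXn eq_sym.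
by case: eqP; rewrite ?mulr1 ?mulr0.
Qed.

Lemma comp_sumE b fbar : comp_sum b fbar = comp_sum_pow b (fps_mul fbar (fpsX K)).
Proof.
do 2![apply: functional_extensionality => ?]; apply: eq_bigr => k _.
rewrite (fps_pow_ffun _ _ (leqnn _)) mulr_sumr big_mkcondl /=; apply: eq_bigr => i _.
case: ifP => [/forallP i_pos | /negbT /forallPn [j]]; last first.
  by rewrite lt0n negbK => /eqP ij0; rewrite (bigD1 j) //= fps_mulXr ij0 mul0r mulr0.
congr (_ * _); apply: eq_bigr => j _; rewrite fps_mulXr.
by case: (nat_of_ord (i j)) (i_pos j).
Qed.

End CompositionSums.

Section OrderTwoComposition.
Variables (K : numFieldType) (b h : fps K).
Hypotheses (h0 : h 0%N = 0) (h1 : h 1%N = 0).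

Lemma fps_pow_order2E k n : fps_pow h k n =
  if (n < 2 * k)%N then 0 else (drop_poly 2 (trunc n h) ^+ k)`_(n - 2 * k).
Proof.
have trunc_h_small i : (i < 2)%N -> (trunc n h)`_i = 0.
  by case: i => [|[|]] // _; rewrite coef_poly ?h0 ?h1 ?if_same.
by rewrite (coef_fps_pow _ _ (leqnn n)) (exp_drop_poly _ trunc_h_small) coefMXn.
Qed.

Lemma fps_pow_order2_lt k n : (n < 2 * k)%N -> fps_pow h k n = 0.
Proof. by move=> lt_n2k; rewrite fps_pow_order2E lt_n2k. Qed.

Lemma fps_pow_order2_double k : fps_pow h k (2 * k)%N = h 2%N ^+ k.
Proof.
case: k => [|k]; first by rewrite expr0.
rewrite fps_pow_order2E ltnn subnn -horner_coef0 horner_exp horner_coef0.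
by rewrite coef_drop_poly coef_trunc //; lia.
Qed.

Lemma fps_comp_order2 n m : (n < 2 * m.+1)%N ->
  fps_comp b h n = b 0%N * fps1 K n + comp_sum_pow b h n m.
Proof.
move=> lt_n2m; rewrite /fps_comp /comp_sum_pow.
rewrite (@eq_big_ord_vanish _ (fun k => b k * fps_pow h k n) n.+1 m.+1).
- by rewrite big_ord_recl [in RHS]big_mkcond big_ord_recl /= add0r.
- by move=> k hk; rewrite fps_pow_order2_lt ?mulr0 //; lia.
- by move=> k hk; rewrite fps_pow_order2_lt ?mulr0 //; lia.
Qed.

Lemma fps_comp_order2_odd l :
  fps_comp b h (2 * l).+1 = comp_sum_pow b h (2 * l).+1 l.
Proof. by rewrite (@fps_comp_order2 _ l) ?mulr0 ?add0r //; lia. Qed.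

Lemma fps_comp_order2_even l : fps_comp b h (2 * l.+1)%N =
  comp_sum_pow b h (2 * l.+1) l + b l.+1 * h 2%N ^+ l.+1.
Proof.
rewrite (@fps_comp_order2 _ l.+1) ?comp_sum_powS ?fps_pow_order2_double; last lia.
by rewrite mulnS /fps1 /= mulr0 add0r.
Qed.

Lemma fps_comp_order2P z c : c * h 2%N = 1 ->
  z = fps_comp b h <->
  [/\ b 0%N = z 0%N,
      z 1%N = 0,
      (forall l : nat, (1 <= l)%N ->
         b l = c ^+ l * (z (2 * l)%N - comp_sum_pow b h (2 * l) l.-1))
    & (forall l : nat, (1 <= l)%N -> z (2 * l).+1 = comp_sum_pow b h (2 * l).+1 l)].
Proof.
move=> ch2; split=> [-> | [b0 z1 z_even z_odd]].
  split=> [||[|l] _ //|l _]; last exact: fps_comp_order2_odd.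
  - by rewrite fps_comp_coef0.
  - by rewrite fps_comp_coef1 h1 mulr0.
  by rewrite fps_comp_order2_even /= addrC addKr mulrCA -exprMn ch2 expr1n mulr1.
apply: functional_extensionality => n; rewrite -[n]odd_double_half -mul2n.
case: (odd n); case: n./2 => [|l] /=.
- by rewrite fps_comp_coef1 h1 mulr0.
- by rewrite add1n z_odd // fps_comp_order2_odd.
- by rewrite fps_comp_coef0.
rewrite add0n fps_comp_order2_even (z_even l.+1) //=.
by rewrite mulrAC -exprMn ch2 expr1n mul1r addrC subrK.
Qed.

End OrderTwoComposition.

Theorem theorem3p4 (K : numFieldType) (g f z fbar : fps K) :
  proper_riordan g f ->
  is_Zsequence g f z ->
  is_comp_inverse f fbar ->
  forall bhat : fps K,
    is_typeII_Bseq g f bhat <->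
    [/\ bhat 0%N = z 0%N,
        z 1%N = 0,
        (forall l : nat, (1 <= l)%N ->
           bhat l = f 1%N ^+ l * (z (2 * l)%N - comp_sum bhat fbar (2 * l) l.-1))
      & (forall l : nat, (1 <= l)%N ->
           z (2 * l).+1 = comp_sum bhat fbar (2 * l).+1 l)].
Proof.
move=> [g0 [f0 _]] HZ inv_f bhat; have [fb0 [_ fb_f]] := inv_f.
have g0_neq0 : g 0%N != 0 by rewrite g0 oner_neq0.
apply: iff_trans (typeII_BseqP bhat g0_neq0 f0 HZ inv_f) _.
rewrite !comp_sumE; apply: fps_comp_order2P.
- by rewrite fps_mul_coef0 mulr0.
- by rewrite fps_mulXr.
- by rewrite fps_mulXr mulrC -fps_comp_coef1 fb_f.
Qed.
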